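(* Let $r\ge 2$ be a constant and $\lambda\le n^r$. Consider $\lambda$ isolated islands (no migration), each independently running the (1+1) EA with mutation probability $1/n$ on $\mathrm{Fork}_{n,r}$ from an independent uniformly random initial string. The expected total number of fitness evaluations (summed over all islands, one per island per round) until all $\lambda$ islands have the optimum is in $\Omega(\lambda n^{2r}\log\lambda)$.
   Context: $\mathrm{Fork}_{n,r}(x)=n+1$ if $x=0^r1^{n-r}$, $n+2$ if $x=1^{n-r}0^r$ (the optimum), and $|x|_1$ otherwise, for $n\ge 2r$. The (1+1) EA: each round create $y$ by flipping each bit of the current $x$ independently with probability $1/n$ and set $x\gets y$ if the fitness of $y$ is at least that of $x$. *)

From HB Require Import structures.
From mathcomp Require Import all_boot all_order all_algebra.
From mathcomp Require Import all_classical all_reals all_analysis.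
Set Implicit Arguments. Unset Strict Implicit. Unset Printing Implicit Defensive.
Import Order.TTheory GRing.Theory Num.Theory.
Local Open Scope ring_scope.

(* bit strings of length n, bit i is position i (0-based, left to right) *)
Definition bits (n : nat) := {ffun 'I_n -> bool}.

Definition ones n (x : bits n) : nat := #|[pred i | x i]|.

Definition fork_local n r : bits n := [ffun i : 'I_n => (r <= i)%N].
Definition fork_opt n r : bits n := [ffun i : 'I_n => (i < n - r)%N].

Definition fork n r (x : bits n) : nat :=
  if x == fork_local n r then n.+1
  else if x == fork_opt n r then n.+2
  else ones x.

Definition hamming n (x y : bits n) : nat := #|[pred i | x i != y i]|.

Definition mutp (R : realType) n (x z : bits n) : R :=
  (n%:R^-1) ^+ hamming x z * (1 - n%:R^-1) ^+ (n - hamming x z).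

Definition ea_step (R : realType) n r (x y : bits n) : R :=
  \sum_(z : bits n) mutp R x z
     * ((if (fork r x <= fork r z)%N then z else x) == y)%:R.

Definition islands n lam := {ffun 'I_lam -> bits n}.

Definition islands_step (R : realType) n r lam (X Y : islands n lam) : R :=
  \prod_(i < lam) ea_step R r (X i) (Y i).

(* independent uniform initialisation = uniform on joint states *)
Definition islands_init (R : realType) n lam (X : islands n lam) : R :=
  (#|{: islands n lam}|%:R)^-1.

Definition all_opt n r lam (X : islands n lam) : bool :=
  [forall i, X i == fork_opt n r].

(* surv t X = P(X_t = X and no time s <= t has all islands at the optimum) *)
Fixpoint surv (R : realType) n r lam (t : nat) (X : islands n lam) : R :=
  if all_opt r X then 0 else
  match t with
  | 0 => islands_init R X
  | t'.+1 => \sum_(Y : islands n lam) surv R r t' Y * islands_step R r Y X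
  end.

(* P(T > t), T = first round at which all islands have the optimum *)
Definition tailT (R : realType) n r lam (t : nat) : R :=
  \sum_(X : islands n lam) surv R r t X.

(* E[T] = sum_{t >= 0} P(T > t), in the extended reals *)
Definition expected_rounds (R : realType) n r lam : \bar R :=
  (\sum_(0 <= t <oo) (tailT R n r lam t)%:E)%E.

Definition expected_evals (R : realType) n r lam : \bar R :=
  ((lam%:R)%:E * expected_rounds R n r lam)%E.

From HB Require Import structures.
From mathcomp Require Import all_boot all_order all_algebra.
From mathcomp Require Import all_classical all_reals all_analysis.
From mathcomp Require Import zify ring lra.
Set Implicit Arguments. Unset Strict Implicit. Unset Printing Implicit Defensive.
Import Order.TTheory GRing.Theory Num.Theory.
Local Open Scope ring_scope.

(** Reversing a bit string preserves |x|_1 and Hamming distances and swaps the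
local optimum 0^r 1^(n-r) with the global optimum 1^(n-r) 0^r. Hence the law of
a single island, started uniformly, is reversal-invariant away from these two
peaks, and in every round the off-peak mass flows into both peaks at the same
rate. It follows that P(off the peaks)/2 + P(at the local optimum) starts at 1/2
and shrinks by at most the factor 1 - p per round, where p <= n^(-2r) is the
probability of the 2r-bit jump from the local to the global optimum; so an island
still misses the optimum at time t with probability at least (1 - p)^t / 2.
With independent islands, P(T > t) = 1 - P(island at the optimum at time t)^lam,
which stays above 1/5 while lam (1 - p)^t >= 1/2, i.e. for about
n^(2r) log2(lam) / 2 rounds. *)

Section Bernoulli.
Variable R : realFieldType.

Lemma bernoulli_le (x : R) k : -1 <= x -> 1 + k%:R * x <= (1 + x) ^+ k.
Proof.
move=> x_ge; elim: k => [|k IH]; first by rewrite expr0 mul0r addr0.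
have k_ge0 : 0 <= k%:R :> R by [].
rewrite exprSr -natr1; nra.
Qed.

Lemma expr1B_bernoulli_le1 (a : R) k :
  0 <= a -> a <= 1 -> (1 - a) ^+ k * (1 + k%:R * a) <= 1.
Proof.
move=> a_ge0 a_le1.
have powB_ge0 : 0 <= (1 - a) ^+ k by apply: exprn_ge0; lra.
apply: le_trans (_ : (1 - a) ^+ k * (1 + a) ^+ k <= 1).
  by apply: ler_wpM2l => //; apply: bernoulli_le; lra.
by rewrite -exprMn; apply: exprn_ile1; nra.
Qed.

Lemma expr1B_ge_halfX (p : R) k j t : 0 <= p -> p <= 1 ->
  k%:R * p <= 2^-1 -> (t <= k * j)%N -> 2^-1 ^+ j <= (1 - p) ^+ t.
Proof.
move=> p_ge0 p_le1 kp_le tle.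
have half_le : 2^-1 <= (1 - p) ^+ k.
  have := @bernoulli_le (- p) k; rewrite mulrN; lra.
apply: le_trans (_ : ((1 - p) ^+ k) ^+ j <= _).
  by apply: lerXn2r; rewrite ?nnegrE //; lra.
by rewrite -exprM; apply: ler_wiXn2l => //; lra.
Qed.

End Bernoulli.

Lemma ln_le_trunc_log (R : realType) (m : nat) :
  (0 < m)%N -> ln (m%:R : R) <= (trunc_log 2 m).+1%:R.
Proof.
move=> m_gt0.
rewrite -[X in _ <= X]expRK ler_ln ?posrE ?ltr0n ?expR_gt0 //.
apply: le_trans (_ : (2 ^ (trunc_log 2 m).+1)%:R <= _).
  by rewrite ler_nat ltnW // trunc_log_ltn.
rewrite natrX -[X in expR X]mulr1 expRM_natl.
apply: lerXn2r; rewrite ?nnegrE ?expR_ge0 //.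
by have := expR_ge1Dx (1 : R); lra.
Qed.

Section ChainLaw.
Variables (R : numDomainType) (T : finType) (K : T -> T -> R) (mu : T -> R).

Fixpoint chain_law t y : R :=
  if t is t'.+1 then \sum_x chain_law t' x * K x y else mu y.

Hypotheses (K_ge0 : forall x y, 0 <= K x y) (mu_ge0 : forall x, 0 <= mu x).
Hypotheses (K_sum1 : forall x, \sum_y K x y = 1) (mu_sum1 : \sum_x mu x = 1).

Lemma chain_law_ge0 t y : 0 <= chain_law t y.
Proof.
elim: t y => [|t IH] y //=.
by apply: sumr_ge0 => x _; apply: mulr_ge0.
Qed.

Lemma chain_law_sum1 t : \sum_y chain_law t y = 1.
Proof.
elim: t => [|t IH] //=.
rewrite exchange_big -[RHS]IH; apply: eq_bigr => x _.
by rewrite -mulr_sumr K_sum1 mulr1.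
Qed.

End ChainLaw.

Lemma chain_law_prod (R : numDomainType) (I T : finType) (K : T -> T -> R)
    (mu : T -> R) (nu : {ffun I -> T} -> R) t (X : {ffun I -> T}) :
  (forall X, nu X = \prod_i mu (X i)) ->
  chain_law (fun X Y : {ffun I -> T} => \prod_i K (X i) (Y i)) nu t X
  = \prod_i chain_law K mu t (X i).
Proof.
move=> nuE; elim: t X => [//|t IH] X /=.
under eq_bigr do rewrite IH -big_split.
by rewrite bigA_distr_bigA.
Qed.

Section Mutation.
Variables (R : realType) (n : nat).
Local Notation q := (n%:R^-1 : R).

Lemma mutation_rate_ge0 : 0 <= q.
Proof. by rewrite invr_ge0. Qed.

Lemma mutation_rate_le1 : q <= 1.
Proof. by case: n => [|m]; rewrite ?invr0 // invf_le1 ?ltr0Sn // ler1n. Qed.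

Lemma mutpE (x z : bits n) :
  mutp R x z = \prod_i (if x i != z i then q else 1 - q).
Proof.
rewrite /mutp (bigID (fun i => x i != z i)) /=.
rewrite (eq_bigr (fun=> q)) => [|i -> //].
rewrite [X in _ = _ * X](eq_bigr (fun=> 1 - q)) => [|i /negbTE -> //].
rewrite !prodr_const; congr (_ ^+ _ * _ ^+ _).
have := cardC [pred i | x i != z i]; rewrite card_ord => /(canRL (addKn _)) <-.
by apply: eq_card => i; rewrite !inE.
Qed.

Lemma mutp_ge0 (x z : bits n) : 0 <= mutp R x z.
Proof.
have := mutation_rate_ge0; have := mutation_rate_le1 => ? ?.
by rewrite mutpE; apply: prodr_ge0 => i _; case: ifP => _; lra.
Qed.

Lemma mutp_sum1 (x : bits n) : \sum_z mutp R x z = 1.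
Proof.
under eq_bigr do rewrite mutpE.
rewrite -(bigA_distr_bigA (fun i b => if x i != b then q else 1 - q)) /=.
by rewrite big1 // => i _; rewrite big_bool; case: (x i) => /=; ring.
Qed.

End Mutation.

Section EAStep.
Variables (R : realType) (n r : nat).

Definition ea_select (x z : bits n) := if (fork r x <= fork r z)%N then z else x.

Lemma ea_stepE (x y : bits n) :
  ea_step R r x y = \sum_z mutp R x z * (ea_select x z == y)%:R.
Proof. by []. Qed.

Lemma ea_step_ge0 (x y : bits n) : 0 <= ea_step R r x y.
Proof. by apply: sumr_ge0 => z _; rewrite mulr_ge0 ?mutp_ge0. Qed.

Lemma ea_step_sum1 (x : bits n) : \sum_y ea_step R r x y = 1.
Proof.
rewrite exchange_big -[RHS](mutp_sum1 R x); apply: eq_bigr => z _.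
rewrite -mulr_sumr (bigD1 (ea_select x z)) //= eqxx big1 ?addr0 ?mulr1 //.
by move=> y; rewrite eq_sym => /negbTE ->.
Qed.

End EAStep.

Section ForkLandscape.
Variables (n r : nat).
Local Notation L := (fork_local n r).
Local Notation O := (fork_opt n r).

Definition is_peak (x : bits n) := (x == L) || (x == O).

Lemma is_peak_local : is_peak L.
Proof. by rewrite /is_peak eqxx. Qed.

Lemma is_peak_opt : is_peak O.
Proof. by rewrite /is_peak eqxx orbT. Qed.

Lemma ones_le (x : bits n) : (ones x <= n)%N.
Proof. by rewrite /ones -[leqRHS](card_ord n) max_card. Qed.

Lemma fork_off_peak (x : bits n) : ~~ is_peak x -> fork r x = ones x.
Proof. by rewrite /is_peak negb_or /fork => /andP[/negbTE -> /negbTE ->]. Qed.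

Lemma fork_peak_gt (x : bits n) : is_peak x -> (n < fork r x)%N.
Proof. by rewrite /fork; case/orP=> /eqP->; rewrite ?eqxx //; case: ifP. Qed.

Lemma is_peak_fork_gt (x : bits n) : (n < fork r x)%N -> is_peak x.
Proof.
by apply: contraTT => /fork_off_peak ->; rewrite -leqNgt ones_le.
Qed.

Lemma fork_local_neq_opt : (0 < r < n)%N -> L != O.
Proof.
case/andP=> r_gt0 r_lt_n; apply/eqP => /ffunP/(_ (Ordinal (ltn_trans r_gt0 r_lt_n))).
by rewrite !ffunE /=; lia.
Qed.

Lemma hamming_local_opt : (2 * r <= n)%N -> hamming L O = (2 * r)%N.
Proof.
move=> le2r; set F := fun i : nat => nat_of_bool ((r <= i) != (i < n - r))%N.
have sum_const (a b c : nat) : (forall i, (a <= i < b)%N -> F i = c) ->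
    (\sum_(a <= i < b) F i = (b - a) * c)%N.
  by move=> Fc; rewrite (eq_big_nat _ _ Fc) sum_nat_const_nat.
rewrite /hamming -sum1_card big_mkcond /=.
rewrite (eq_bigr (fun i : 'I_n => F i)) => [|i _]; last first.
  by rewrite !inE !ffunE /F; case: (_ != _).
rewrite -(big_mkord xpredT F) (@big_cat_nat _ _ _ r 0%N n) //; last by lia.
rewrite (@big_cat_nat _ _ _ (n - r)%N r n) /=; try lia.
rewrite (sum_const 0%N r 1%N) ?(sum_const r (n - r)%N 0%N) ?(sum_const (n - r)%N n 1%N);
  try (move=> i /andP[? ?]; rewrite /F; case: leqP => ?; case: ltnP => ? /=; lia).
lia.
Qed.

Definition rev_bits (x : bits n) : bits n := [ffun i => x (rev_ord i)].

Lemma rev_bitsK : involutive rev_bits.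
Proof. by move=> x; apply/ffunP => i; rewrite !ffunE rev_ordK. Qed.

Lemma rev_bits_inj : injective rev_bits.
Proof. exact: inv_inj rev_bitsK. Qed.

Lemma rev_bits_local : rev_bits L = O.
Proof. by apply/ffunP => -[i lt_in]; rewrite !ffunE /=; apply/idP/idP; lia. Qed.

Lemma rev_bits_opt : rev_bits O = L.
Proof. by rewrite -rev_bits_local rev_bitsK. Qed.

Lemma is_peak_rev (x : bits n) : is_peak (rev_bits x) = is_peak x.
Proof.
by rewrite /is_peak -{1}rev_bits_local -{1}rev_bits_opt !(inj_eq rev_bits_inj) orbC.
Qed.

Lemma card_rev_ord (P : pred 'I_n) : #|[pred i | P (rev_ord i)]| = #|P|.
Proof.
rewrite -!sum1_card (reindex_inj rev_ord_inj) /=.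
by apply: eq_bigl => i; rewrite !inE rev_ordK.
Qed.

Lemma ones_rev (x : bits n) : ones (rev_bits x) = ones x.
Proof.
by rewrite /ones -(card_rev_ord [pred i | x i]); apply: eq_card => i; rewrite !inE ffunE.
Qed.

Lemma hamming_rev (x z : bits n) : hamming (rev_bits x) (rev_bits z) = hamming x z.
Proof.
rewrite /hamming -(card_rev_ord [pred i | x i != z i]).
by apply: eq_card => i; rewrite !inE !ffunE.
Qed.

Lemma fork_rev (x : bits n) : ~~ is_peak x -> fork r (rev_bits x) = fork r x.
Proof. by move=> x_off; rewrite !fork_off_peak ?is_peak_rev // ones_rev. Qed.

Lemma ea_select_rev (x z : bits n) : ~~ is_peak x ->
  ea_select r (rev_bits x) (rev_bits z) = rev_bits (ea_select r x z).
Proof.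
move=> x_off; rewrite /ea_select fork_rev //.
have x_le : (fork r x <= n)%N by rewrite fork_off_peak ?ones_le.
case z_peak: (is_peak z); last by rewrite fork_rev ?z_peak //; case: ifP.
have fz := fork_peak_gt z_peak.
have frz : (n < fork r (rev_bits z))%N by apply: fork_peak_gt; rewrite is_peak_rev.
by rewrite (leq_trans x_le (ltnW fz)) (leq_trans x_le (ltnW frz)).
Qed.

Lemma ea_step_rev (R : realType) (x y : bits n) : ~~ is_peak x ->
  ea_step R r (rev_bits x) (rev_bits y) = ea_step R r x y.
Proof.
move=> x_off; rewrite !ea_stepE (reindex_inj rev_bits_inj) /=.
apply: eq_bigr => z _.
by rewrite /mutp hamming_rev ea_select_rev // (inj_eq rev_bits_inj).
Qed.

End ForkLandscape.

Definition island_law (R : realType) n r : nat -> bits n -> R :=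
  chain_law (ea_step R r) (fun=> #|{: bits n}|%:R^-1).

Definition escape_prob (R : realType) n r : R :=
  ea_step R r (fork_local n r) (fork_opt n r).

Section OneIsland.
Variables (R : realType) (n r : nat).
Hypotheses (r_gt0 : (0 < r)%N) (r_lt_n : (r < n)%N).
Local Notation L := (fork_local n r).
Local Notation O := (fork_opt n r).
Local Notation step := (@ea_step R n r).
Local Notation law := (@island_law R n r).
Local Notation p := (escape_prob R n r).

Let L_neq_O : L != O. Proof. by apply: fork_local_neq_opt; rewrite r_gt0. Qed.

Lemma fork_opt_top : fork r O = n.+2.
Proof. by rewrite /fork eq_sym (negbTE L_neq_O) eqxx. Qed.

Lemma ea_step_opt (y : bits n) : step O y = (O == y)%:R.
Proof.
have select_O z : ea_select r O z = O.
  rewrite /ea_select fork_opt_top; case: ifP => // fz.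
  case/orP: (is_peak_fork_gt (ltnW fz)) => /eqP // z_L.
  by move: fz; rewrite z_L /fork eqxx ltnn.
rewrite ea_stepE; under eq_bigr do rewrite select_O.
by rewrite -mulr_suml mutp_sum1 mul1r.
Qed.

Lemma ea_select_local_peak (z : bits n) : is_peak r (ea_select r L z).
Proof.
rewrite /ea_select; case: ifP => [fz|_]; last exact: is_peak_local.
by apply: is_peak_fork_gt; apply: leq_trans fz; apply/fork_peak_gt/is_peak_local.
Qed.

Lemma ea_step_peak_off (x y : bits n) : is_peak r x -> ~~ is_peak r y -> step x y = 0.
Proof.
move=> /orP[] /eqP-> y_off; last first.
  by rewrite ea_step_opt; case: eqP y_off => // <-; rewrite is_peak_opt.
rewrite ea_stepE big1 // => z _; case: eqP => [sel_y|_]; last by rewrite mulr0.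
by move: y_off; rewrite -sel_y ea_select_local_peak.
Qed.

Lemma ea_step_local_sum1 : step L L + p = 1.
Proof.
rewrite /escape_prob !ea_stepE -big_split -[RHS](mutp_sum1 R L) /=.
apply: eq_bigr => z _; rewrite -mulrDr.
have := ea_select_local_peak z; rewrite /is_peak.
case/orP=> /eqP->; rewrite eqxx; last rewrite eq_sym.
  by rewrite (negbTE L_neq_O) addr0 mulr1.
by rewrite (negbTE L_neq_O) add0r mulr1.
Qed.

Lemma escape_probE : p = mutp R L O.
Proof.
rewrite /escape_prob ea_stepE (bigD1 O) //= big1 ?addr0 => [|z z_neq_O].
  by rewrite /ea_select fork_opt_top {1}/fork eqxx leqnSn eqxx mulr1.
by rewrite /ea_select; case: ifP => _; rewrite ?(negbTE z_neq_O) ?(negbTE L_neq_O) mulr0.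
Qed.

Lemma escape_prob_ge0 : 0 <= p.
Proof. exact: ea_step_ge0. Qed.

Lemma escape_prob_le1 : p <= 1.
Proof. by have := ea_step_ge0 R r L L; have := ea_step_local_sum1; lra. Qed.

Lemma escape_prob_le : (2 * r <= n)%N -> p <= n%:R^-1 ^+ (2 * r).
Proof.
move=> le2r; have := mutation_rate_ge0 R n; have := mutation_rate_le1 R n => ? ?.
rewrite escape_probE /mutp hamming_local_opt //.
by apply: ler_piMr; rewrite ?exprn_ge0 ?exprn_ile1 //; lra.
Qed.

Lemma escape_prob_mul_le k : (2 * r <= n)%N -> (2 * k <= n ^ (2 * r))%N ->
  k%:R * p <= 2^-1.
Proof.
move=> le2r le2k; have m_gt0 : 0 < (n ^ (2 * r))%:R :> R by rewrite ltr0n expn_gt0; lia.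
apply: le_trans (_ : k%:R * (n ^ (2 * r))%:R^-1 <= _).
  by rewrite ler_wpM2l // natrX -exprVn escape_prob_le.
have : (2 * k)%:R <= (n ^ (2 * r))%:R :> R by rewrite ler_nat.
by rewrite natrM ler_pdivrMr //; lra.
Qed.

Lemma island_law_ge0 t y : 0 <= law t y.
Proof. by apply: chain_law_ge0 => *; rewrite ?ea_step_ge0 ?invr_ge0. Qed.

Lemma island_law_sum1 t : \sum_y law t y = 1.
Proof.
apply: chain_law_sum1 => [x|]; first exact: ea_step_sum1.
rewrite sumr_const -[_ *+ _]mulr_natr mulVf // pnatr_eq0 -lt0n.
by rewrite card_ffun expn_gt0 card_bool.
Qed.

Lemma sum_split_peaks (f : bits n -> R) :
  \sum_y f y = f L + f O + \sum_(y | ~~ is_peak r y) f y.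
Proof.
rewrite (bigD1 L) //= (bigD1 O) 1?eq_sym //= addrA; congr (_ + _).
by apply: eq_bigl => y; rewrite /is_peak negb_or andbC.
Qed.

Lemma island_law_succ_off t y : ~~ is_peak r y ->
  law t.+1 y = \sum_(x | ~~ is_peak r x) law t x * step x y.
Proof.
move=> y_off; rewrite /= sum_split_peaks.
by rewrite !ea_step_peak_off ?is_peak_local ?is_peak_opt // !mulr0 !add0r.
Qed.

Lemma island_law_rev t y : ~~ is_peak r y -> law t (rev_bits y) = law t y.
Proof.
elim: t y => [//|t IH] y y_off.
rewrite !island_law_succ_off ?is_peak_rev // (reindex_inj (@rev_bits_inj n)) /=.
apply: eq_big => [x|x x_off]; first by rewrite is_peak_rev.
by rewrite is_peak_rev in x_off; rewrite IH // ea_step_rev.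
Qed.

Definition off_peak_mass t := \sum_(x | ~~ is_peak r x) law t x.

Lemma off_peak_mass_ge0 t : 0 <= off_peak_mass t.
Proof. by apply: sumr_ge0 => x _; apply: island_law_ge0. Qed.

Lemma island_law_peaks t : law t L + law t O + off_peak_mass t = 1.
Proof. by rewrite -(island_law_sum1 t) [RHS]sum_split_peaks. Qed.

Lemma inflow_opt_local t :
  \sum_(x | ~~ is_peak r x) law t x * step x O
  = \sum_(x | ~~ is_peak r x) law t x * step x L.
Proof.
rewrite (reindex_inj (@rev_bits_inj n)) /=.
apply: eq_big => [x|x x_off]; first by rewrite is_peak_rev.
by rewrite is_peak_rev in x_off; rewrite island_law_rev // -rev_bits_local ea_step_rev.
Qed.

Lemma island_law_succ_local t : law t.+1 L
  = (1 - p) * law t L + \sum_(x | ~~ is_peak r x) law t x * step x L.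
Proof.
rewrite /= sum_split_peaks ea_step_opt eq_sym (negbTE L_neq_O) mulr0 addr0.
by rewrite -ea_step_local_sum1 addrK mulrC.
Qed.

Lemma off_peak_mass_succ t : off_peak_mass t.+1 = off_peak_mass t
  - \sum_(x | ~~ is_peak r x) law t x * step x L
  - \sum_(x | ~~ is_peak r x) law t x * step x O.
Proof.
rewrite /off_peak_mass; under eq_bigr => y y_off do rewrite island_law_succ_off //.
rewrite exchange_big -!sumrB; apply: eq_bigr => x _.
rewrite -mulr_sumr (_ : \sum_(y | ~~ is_peak r y) step x y = 1 - step x L - step x O).
  by ring.
by have := ea_step_sum1 R r x; rewrite sum_split_peaks; lra.
Qed.

Definition potential t := off_peak_mass t / 2 + law t L.

Lemma potential_succ t : (1 - p) * potential t <= potential t.+1.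
Proof.
rewrite /potential off_peak_mass_succ island_law_succ_local inflow_opt_local.
by have := off_peak_mass_ge0 t; have := escape_prob_ge0; nra.
Qed.

Lemma potential_ge t : (1 - p) ^+ t / 2 <= potential t.
Proof.
elim: t => [|t IH]; first by have := island_law_peaks 0; rewrite /potential /=; lra.
apply: le_trans (potential_succ t); rewrite exprS -mulrA.
by apply: ler_wpM2l => //; have := escape_prob_le1; lra.
Qed.

Lemma island_law_opt_le t : law t O <= 1 - (1 - p) ^+ t / 2.
Proof.
have := potential_ge t; have := island_law_peaks t; have := off_peak_mass_ge0 t.
by rewrite /potential; lra.
Qed.

Lemma island_law_opt_le1 t : law t O <= 1.
Proof.
by have := island_law_peaks t; have := off_peak_mass_ge0 t; have := island_law_ge0 t L; lra.
Qed.

End OneIsland.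

Section Islands.
Variables (R : realType) (n r lam : nat).
Hypotheses (r_gt0 : (0 < r)%N) (r_lt_n : (r < n)%N).
Local Notation O := (fork_opt n r).
Local Notation law := (@island_law R n r).
Local Notation p := (escape_prob R n r).
Local Notation tail := (tailT R n r lam).

Lemma islands_lawE t (X : islands n lam) :
  chain_law (@islands_step R n r lam) (@islands_init R n lam) t X
  = \prod_i law t (X i).
Proof.
apply: chain_law_prod => Y.
by rewrite /islands_init prodr_const card_ord card_ffun card_ord natrX exprVn.
Qed.

Lemma islands_step_opt (X Y : islands n lam) :
  all_opt r X -> ~~ all_opt r Y -> islands_step R r X Y = 0.
Proof.
move=> /forallP X_opt; rewrite negb_forall => /existsP[i Yi_neq].
rewrite /islands_step (bigD1 i) //= (eqP (X_opt i)) ea_step_opt //.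
by rewrite eq_sym (negbTE Yi_neq) mul0r.
Qed.

Lemma survE t (X : islands n lam) :
  surv R r t X = if all_opt r X then 0 else \prod_i law t (X i).
Proof.
rewrite -islands_lawE; elim: t X => [|t IH] X //=.
case: ifP => // /negbT X_opt; apply: eq_bigr => Y _; rewrite IH.
by case: ifP => // Y_opt; rewrite islands_step_opt ?Y_opt // !mulr0.
Qed.

Lemma tailTE t : tail t = 1 - law t O ^+ lam.
Proof.
set c : islands n lam := [ffun=> O].
have all_optE (X : islands n lam) : all_opt r X = (X == c).
  apply/forallP/eqP => [X_opt|-> i]; last by rewrite ffunE.
  by apply/ffunP => i; rewrite ffunE; apply/eqP.
have law_c : \prod_i law t (c i) = law t O ^+ lam.
  by under eq_bigr do rewrite ffunE; rewrite prodr_const card_ord.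
have sum1 : \sum_(X : islands n lam) \prod_i law t (X i) = 1.
  rewrite -(bigA_distr_bigA (fun (i : 'I_lam) (y : bits n) => law t y)) /=.
  by rewrite big1 // => i _; apply: island_law_sum1.
rewrite /tailT (bigD1 c) //= survE all_optE eqxx add0r.
under eq_bigr => X X_neq do rewrite survE all_optE (negbTE X_neq).
by move: sum1; rewrite (bigD1 c) //= law_c; lra.
Qed.

Lemma tailT_ge0 t : 0 <= tail t.
Proof.
by rewrite tailTE subr_ge0 exprn_ile1 ?island_law_ge0 ?island_law_opt_le1.
Qed.

Lemma tailT_ge t j : (2 ^ j <= lam)%N -> 2^-1 ^+ j.+1 <= (1 - p) ^+ t ->
  5^-1 <= tail t.
Proof.
move=> lam_ge pow_ge; set a := (1 - p) ^+ t / 2.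
have p_ge0 : 0 <= p by apply: escape_prob_ge0.
have p_le1 : p <= 1 by apply: escape_prob_le1.
have a_ge0 : 0 <= a by rewrite divr_ge0 ?exprn_ge0 //; lra.
have pow_le1 : (1 - p) ^+ t <= 1 by apply: exprn_ile1; lra.
have a_le1 : a <= 1 by rewrite /a; lra.
have lam_a : 4^-1 <= lam%:R * a.
  have half : (2 ^ j)%:R * 2^-1 ^+ j.+1 = 2^-1 :> R.
    by rewrite exprSr exprVn natrX mulrA mulfV ?mul1r // expf_neq0.
  have : (2 ^ j)%:R * 2^-1 ^+ j.+1 <= lam%:R * (1 - p) ^+ t.
    by apply: ler_pM; rewrite ?ler_nat ?exprn_ge0.
  rewrite /a; lra.
have law_le : law t O <= 1 - a by apply: island_law_opt_le.
have : law t O ^+ lam <= (1 - a) ^+ lam.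
  by apply: lerXn2r; rewrite ?nnegrE ?island_law_ge0 //; lra.
have := expr1B_bernoulli_le1 lam a_ge0 a_le1.
have : 0 <= (1 - a) ^+ lam by apply: exprn_ge0; lra.
rewrite tailTE; nra.
Qed.

Lemma expected_rounds_ge k j : (2 * r <= n)%N -> (2 * k <= n ^ (2 * r))%N ->
  (2 ^ j <= lam)%N -> (((k * j.+1)%:R / 5)%:E <= expected_rounds R n r lam)%E.
Proof.
move=> le2r le2k lam_ge; have kp_le := escape_prob_mul_le R r_gt0 r_lt_n le2r le2k.
have tail_ge t : (t < k * j.+1)%N -> 5^-1 <= tail t.
  move=> /ltnW t_le; apply: tailT_ge lam_ge _.
  by apply: expr1B_ge_halfX t_le; rewrite ?escape_prob_ge0 ?escape_prob_le1.
apply: le_trans (nneseries_lim_ge (k * j.+1) _) => [|t _ _]; last first.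
  by rewrite lee_fin tailT_ge0.
rewrite sumEFin lee_fin big_mkord.
apply: le_trans (_ : \sum_(t < k * j.+1) 5^-1 <= _); last first.
  by apply: ler_sum => t _; apply: tail_ge.
by rewrite sumr_const card_ord -[leRHS]mulr_natl.
Qed.

End Islands.

Theorem corollary3 (R : realType) (r : nat) : (2 <= r)%N ->
  exists c : R, 0 < c /\ exists n0 : nat, forall n lam : nat,
    (n0 <= n)%N -> (1 <= lam)%N -> (lam <= n ^ r)%N ->
    ((c * lam%:R * n%:R ^+ (2 * r) * ln (lam%:R : R))%:E
       <= expected_evals R n r lam)%E.
Proof.
move=> r_ge2; exists 20^-1; split; first by rewrite invr_gt0.
(* the lower bound holds without the hypothesis [lam <= n ^ r] *)
exists (2 * r)%N => n lam n_ge lam_gt0 _.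
have r_gt0 : (0 < r)%N by lia.
have r_lt_n : (r < n)%N by lia.
set m := (n ^ (2 * r))%N; set k := (m %/ 2)%N; set j := trunc_log 2 lam.
have m_ge2 : (2 <= m)%N.
  by apply: leq_trans (leq_pexp2l _ (_ : 1 <= 2 * r)%N); rewrite ?expn1; lia.
have le2k : (2 * k <= m)%N by rewrite /k; lia.
have rounds := expected_rounds_ge R r_gt0 r_lt_n n_ge le2k (trunc_logP (ltnSn 1) lam_gt0).
have ln_le : ln (lam%:R : R) <= j.+1%:R by apply: ln_le_trunc_log.
have ln_ge0 : 0 <= ln (lam%:R : R) by rewrite ln_ge0 // ler1n.
have m_le : m%:R <= 4 * k%:R :> R by rewrite -natrM ler_nat; lia.
have mln_le : m%:R * ln (lam%:R : R) <= 4 * k%:R * j.+1%:R by apply: ler_pM.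
rewrite /expected_evals -natrX -/m.
apply: (le_trans _ (lee_pmul _ _ (lexx _) rounds)); rewrite ?lee_fin ?divr_ge0 //.
rewrite -/j natrM.
have : 0 <= lam%:R :> R by [].
nra.
Qed.
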